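(* There exists $N$ such that for all integers $n\geq N$, $$t(n,2)\geq n\log_2 n-4n\log_2\log_2 n-2n.$$
   Context: All graphs are finite, simple and undirected. In an edge-colored graph (adjacent edges may receive the same color), a path is a rainbow path if no two of its edges have the same color. A graph $G$ is $d$-rainbow connected if there is an edge-coloring of $G$ using $d$ colors such that every two distinct vertices of $G$ are joined by a rainbow path. For positive integers $n$ and $d$, $t(n,d)$ denotes the minimum number of edges of a $d$-rainbow connected graph on $n$ vertices. *)

From mathcomp Require Import all_boot.
From Stdlib Require Import ClassicalEpsilon Reals.
Set Implicit Arguments. Unset Strict Implicit. Unset Printing Implicit Defensive.

Definition simple_graph n (E : {set {set 'I_n}}) : Prop :=
  forall e, e \in E -> #|e| = 2.

(* The colouring is given on all subsets; only its values on edges matter. *)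
Definition rainbow_path n d (E : {set {set 'I_n}}) (c : {set 'I_n} -> 'I_d)
    (u v : 'I_n) (p : seq 'I_n) : Prop :=
  [/\ last u p = v, uniq (u :: p),
      path (fun x y => [set x; y] \in E) u p &
      uniq [seq c [set xy.1; xy.2] | xy <- zip (u :: p) p]].

Definition rainbow_connected n d (E : {set {set 'I_n}}) : Prop :=
  exists c : {set 'I_n} -> 'I_d,
    forall u v : 'I_n, u != v -> exists p, rainbow_path E c u v p.

Definition asb (P : Prop) : bool :=
  if excluded_middle_informative P then true else false.

(* The default value 'C(n,2) (number of edges of K_n, which is
   d-rainbow connected for d >= 1) does not exceed the true minimum. *)
Definition t (n d : nat) : nat :=
  \big[minn/'C(n, 2)]_(E : {set {set 'I_n}} |
       asb (simple_graph E /\ rainbow_connected d E)) #|E|.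

Definition log2 (x : R) : R := (ln x / ln 2)%R.

(* Fix a 2-colouring under which every two vertices are joined by a rainbow
   path, necessarily of length at most 2.  Call a vertex low if its degree is
   below D ~ (log2 n)^2 and high otherwise; there are at most 2|E|/D high
   vertices.  Given any map s from vertices to colours, consider the low
   vertices u whose edges to high neighbours x all have colour s x.  Two of
   them cannot be joined through a high vertex x (both edges would have colour
   s x), so they all lie in the ball of radius 2 around one of them in which
   the middle vertices are low; hence there are at most 1 + D + D^2 of them.
   Averaging over the 2^n maps s gives the Kraft-type inequality
     sum_(u low) 2^(-h u) <= 1 + D + D^2,
   h u being the number of high neighbours of u.  By convexity of 2^(-x) this
   forces sum_(u low) h u >= m log2 (m / (1 + D + D^2)), m being the number
   of low vertices, and this sum counts each low-high edge once.  The choice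
   of D turns this into n log2 n - 4 n log2 log2 n - 2n. *)

From Stdlib Require Import Reals Lra.
From mathcomp Require Import all_boot.
Set Implicit Arguments. Unset Strict Implicit. Unset Printing Implicit Defensive.

Lemma sum_mem_card (T : finType) (A : {set T}) : \sum_x (x \in A : nat) = #|A|.
Proof. by rewrite -sum1_card [RHS]big_mkcond; apply: eq_bigr => x _; case: (x \in A). Qed.

Lemma sum_card_incident (T U : finType) (A : {set U}) (Q : T -> U -> bool) :
  \sum_x #|[set e in A | Q x e]| = \sum_(e in A) #|[set x | Q x e]|.
Proof.
under eq_bigr do rewrite -sum_mem_card.
rewrite exchange_big [RHS]big_mkcond; apply: eq_bigr => e _.
case: ifP => eA; last by rewrite big1 // => x _; rewrite inE eA.
by rewrite -sum_mem_card; apply: eq_bigr => x _; rewrite !inE eA.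
Qed.

Lemma card_ffun_agree (T : finType) k (A : {set T}) (g : T -> 'I_k) :
  #|[set s : {ffun T -> 'I_k} | [forall x in A, s x == g x]]| = k ^ (#|T| - #|A|).
Proof.
pose F x := if x \in A then pred1 (g x) else predT.
have -> : #|[set s : {ffun T -> 'I_k} | [forall x in A, s x == g x]]| = #|family F|.
  apply: eq_card => s; rewrite inE; apply/forall_inP/familyP => sF x.
    by rewrite /F; case: ifP => // /sF.
  by move=> xA; have := sF x; rewrite /F xA.
rewrite card_family foldrE big_map big_enum (bigID (mem A)) /=.
rewrite (eq_bigr (fun=> 1)) => [|x xA]; last by rewrite /F xA card1.
rewrite [X in _ * X](eq_bigr (fun=> k)) => [|x xA]; last first.
  by rewrite /F (negbTE xA) -[RHS]card_ord; apply: eq_card.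
rewrite prod_nat_const exp1n mul1n -(cardsC A) addKn -prod_nat_const.
by apply: eq_bigl => x; rewrite in_setC.
Qed.

Lemma card_bigcup_le (I T : finType) (P : pred I) (F : I -> {set T}) :
  #|\bigcup_(i | P i) F i| <= \sum_(i | P i) #|F i|.
Proof.
apply: (big_ind2 (fun (X : {set T}) m => #|X| <= m)) => [|X m Y k leX leY|i _] //.
  by rewrite cards0.
exact: leq_trans (leq_card_setU X Y) (leq_add leX leY).
Qed.

Section RainbowGraph.
Variables (n : nat) (E : {set {set 'I_n}}).

Definition nbhd (u : 'I_n) : {set 'I_n} := [set x | [set u; x] \in E].

Lemma nbhd_sym u x : (x \in nbhd u) = (u \in nbhd x).
Proof. by rewrite !inE setUC. Qed.

Lemma rainbow_path_size d (c : {set 'I_n} -> 'I_d) u v p :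
  rainbow_path E c u v p -> size p <= d.
Proof.
case=> _ _ _ /card_uniqP; rewrite size_map size_zip /= (minn_idPr (leqnSn _)) => <-.
by apply: leq_trans (max_card _) _; rewrite card_ord.
Qed.

Lemma rainbow_path2 (c : {set 'I_n} -> 'I_2) u w p :
  rainbow_path E c u w p -> u != w ->
  w \in nbhd u \/
  exists y, [/\ y \in nbhd u, w \in nbhd y & c [set u; y] != c [set y; w]].
Proof.
move=> rp uw; move: rp (rainbow_path_size rp).
case: p => [|y [|w' [|]]] [] //=.
- by move=> eq_uw; rewrite eq_uw eqxx in uw.
- by move=> <-; rewrite !andbT => _ uyE _ _; left; rewrite inE.
- move=> <- _ /and3P[uyE ywE _]; rewrite inE andbT => neq_c _.
  by right; exists y; rewrite !inE.
Qed.

Definition low (D : nat) : {set 'I_n} := [set u | #|nbhd u| < D].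

Definition high_nbhd D u : {set 'I_n} := nbhd u :\: low D.

Section Simple.
Hypothesis simpleE : simple_graph E.

Lemma simple_edge_neq u x : [set u; x] \in E -> u != x.
Proof.
by move=> uxE; apply/eqP=> eq_ux; move: (simpleE uxE); rewrite eq_ux setUid cards1.
Qed.

Lemma nbhd_edge_inj u : {in nbhd u &, injective (fun x => [set u; x])}.
Proof.
move=> x y; rewrite inE => /simple_edge_neq ux _ eq_uxy.
have : x \in [set u; y] by rewrite -eq_uxy set22.
by rewrite in_set2 eq_sym (negbTE ux) => /eqP.
Qed.

Lemma incident_edgesE u : [set e in E | u \in e] = (fun x => [set u; x]) @: nbhd u.
Proof.
apply/setP=> e; rewrite inE; apply/andP/imsetP => [[eE ue]|[x ux ->]].
  have /eqP/cards2P[a [b [_ eab]]] := simpleE eE.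
  move: ue eE; rewrite eab in_set2 => /orP[]/eqP-> abE.
    by exists b; rewrite ?inE.
  by exists a; rewrite ?inE setUC.
by move: ux; rewrite inE set21 => ->.
Qed.

Lemma handshake : \sum_u #|nbhd u| = 2 * #|E|.
Proof.
under eq_bigr => u _ do rewrite -(card_in_imset (@nbhd_edge_inj u)) -incident_edgesE.
rewrite sum_card_incident (eq_bigr (fun=> 2)) => [|e eE].
  by rewrite sum_nat_const mulnC.
by rewrite -(simpleE eE); apply: eq_card => x; rewrite inE.
Qed.

Lemma card_high_le D : D * #|~: low D| <= 2 * #|E|.
Proof.
rewrite -handshake mulnC -sum_nat_const [leqRHS](bigID (mem (~: low D))) /=.
apply: leq_trans (leq_addr _ _); apply: leq_sum => u.
by rewrite !inE -leqNgt.
Qed.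

Lemma card_edge_low D e :
  e \in E -> e :\: low D != set0 -> #|e :&: low D| <= 1.
Proof.
move=> eE /set0Pn/card_gt0P high_e; have := cardsID (low D) e.
by rewrite (simpleE eE); case: #|_ :&: _| high_e => [|[|[|]]] //; case: #|_ :\: _|.
Qed.

Lemma sum_high_nbhd_low D : \sum_(u in low D) #|high_nbhd D u| <= #|E|.
Proof.
pose Q u e := (u \in e :&: low D) && (e :\: low D != set0).
apply: (@leq_trans (\sum_u #|[set e in E | Q u e]|)).
  rewrite [leqRHS](bigID (mem (low D))) /=; apply: leq_trans (leq_addr _ _).
  apply: leq_sum => u uL.
  rewrite -(card_in_imset (sub_in2 (subsetP (subsetDl _ _)) (@nbhd_edge_inj u))).
  apply/subset_leq_card/subsetP => _ /imsetP[x /setDP[xN xH] ->].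
  have uxE : [set u; x] \in E by rewrite inE in xN.
  rewrite inE uxE /Q inE set21 uL /=; apply/set0Pn; exists x.
  by rewrite inE set22 xH.
rewrite sum_card_incident -sum1_card; apply: leq_sum => e eE.
have [high_e|] := boolP (e :\: low D != set0).
  apply: leq_trans (card_edge_low eE high_e); apply/subset_leq_card/subsetP => u.
  by rewrite !inE /Q !inE => /andP[].
move/negbNE=> low_e; rewrite (_ : [set u | Q u e] = set0) ?cards0 //.
by apply/setP => u; rewrite !inE /Q low_e andbF.
Qed.

End Simple.

Section Agreeing.
Variables (c : {set 'I_n} -> 'I_2) (D : nat).
Hypothesis rainbow_c : forall u v, u != v -> exists p, rainbow_path E c u v p.

Definition agreeing_low (s : {ffun 'I_n -> 'I_2}) : {set 'I_n} :=
  [set u in low D | [forall x in high_nbhd D u, s x == c [set u; x]]].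

Lemma agreeing_low_reach s u w :
  u \in agreeing_low s -> w \in agreeing_low s -> u != w ->
  w \in nbhd u \/ exists2 y, y \in nbhd u :&: low D & w \in nbhd y.
Proof.
move=> us ws uw; have [p /rainbow_path2 /(_ uw)] := rainbow_c uw.
case=> [|[y [uy yw neq_c]]]; [by left | right; exists y => //].
rewrite in_setI uy; apply: contraNT neq_c => yH.
have yHu : y \in high_nbhd D u by rewrite in_setD yH uy.
have yHw : y \in high_nbhd D w by rewrite in_setD yH nbhd_sym yw.
move: us ws; rewrite !inE => /andP[_ /forall_inP/(_ y yHu)/eqP <-].
by rewrite setUC => /andP[_ /forall_inP/(_ y yHw)/eqP <-].
Qed.

Lemma card_agreeing_low s : #|agreeing_low s| <= 1 + D + D * D.
Proof.
have [->|[u us]] := set_0Vmem (agreeing_low s); first by rewrite cards0.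
have uL : u \in low D by move: us; rewrite inE => /andP[].
have deg_low y : y \in low D -> #|nbhd y| <= D by rewrite inE => /ltnW.
pose ball := u |: (nbhd u :|: \bigcup_(y in nbhd u :&: low D) nbhd y).
apply: (@leq_trans #|ball|).
  apply/subset_leq_card/subsetP => w ws; rewrite in_setU1 in_setU.
  have [//|uw /=] := eqVneq u w.
  have [->//|[y yA wy]] := agreeing_low_reach us ws uw.
  by apply/orP; right; apply/bigcupP; exists y.
rewrite cardsU1 -addnA leq_add ?leq_b1 //.
apply: leq_trans (leq_card_setU _ _) (leq_add (deg_low u uL) _).
apply: leq_trans (card_bigcup_le _ _) _.
apply: (@leq_trans (\sum_(y in nbhd u :&: low D) D)).
  by apply: leq_sum => y; rewrite in_setI => /andP[_ /deg_low].
rewrite sum_nat_const mulnC leq_mul //.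
exact: leq_trans (subset_leq_card (subsetIl _ _)) (deg_low u uL).
Qed.

Lemma sum_agreeing_low :
  \sum_(u in low D) 2 ^ (n - #|high_nbhd D u|) <= 2 ^ n * (1 + D + D * D).
Proof.
have -> : \sum_(u in low D) 2 ^ (n - #|high_nbhd D u|) = \sum_s #|agreeing_low s|.
  rewrite /agreeing_low sum_card_incident; apply: eq_bigr => u _.
  by rewrite card_ffun_agree card_ord.
apply: (@leq_trans (\sum_(s : {ffun 'I_n -> 'I_2}) (1 + D + D * D))).
  by apply: leq_sum => s _; apply: card_agreeing_low.
by rewrite sum_nat_const card_ffun !card_ord.
Qed.

End Agreeing.

End RainbowGraph.

Definition complete_graph n : {set {set 'I_n}} := [set e : {set 'I_n} | #|e| == 2].

Lemma card_complete_graph n : #|complete_graph n| = 'C(n, 2).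
Proof. by rewrite card_draws card_ord. Qed.

Lemma complete_graph_simple n : simple_graph (complete_graph n).
Proof. by move=> e; rewrite inE => /eqP. Qed.

Lemma complete_graph_rainbow n d : rainbow_connected d.+1 (complete_graph n).
Proof.
exists (fun=> ord0) => u v uv; exists [:: v].
by split; rewrite //= ?inE ?andbT ?cards2 ?uv.
Qed.

Local Open Scope R_scope.

Lemma ln_le x y : 0 < x -> x <= y -> ln x <= ln y.
Proof.
move=> x0 /Rle_lt_or_eq_dec[xy|<-]; last exact: Rle_refl.
exact/Rlt_le/ln_increasing.
Qed.

Lemma ln_le_sub1 x : 0 < x -> ln x <= x - 1.
Proof. by move=> x0; have := exp_ineq1_le (ln x); rewrite exp_ln //; lra. Qed.

Lemma log2_le x y : 0 < x -> x <= y -> log2 x <= log2 y.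
Proof.
move=> x0 xy; apply: Rmult_le_compat_r (ln_le x0 xy).
by apply/Rlt_le/Rinv_0_lt_compat; have := ln_lt_2; lra.
Qed.

Lemma log2_mult x y : 0 < x -> 0 < y -> log2 (x * y) = log2 x + log2 y.
Proof. by move=> x0 y0; rewrite /log2 ln_mult //; lra. Qed.

Lemma log2_Rpower2 x : log2 (Rpower 2 x) = x.
Proof. by rewrite /log2 ln_Rpower; field; have := ln_lt_2; lra. Qed.

Lemma log2_pow2 k : log2 (2 ^ k) = INR k.
Proof. by rewrite -Rpower_pow ?log2_Rpower2 //; lra. Qed.

Lemma Rpower2_tangent a x : Rpower 2 (- a) * (1 - ln 2 * (x - a)) <= Rpower 2 (- x).
Proof.
have -> : Rpower 2 (- x) = Rpower 2 (- a) * exp (ln 2 * (a - x)).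
  by rewrite /Rpower -exp_plus; congr exp; ring.
apply: Rmult_le_compat_l; first exact/Rlt_le/exp_pos.
by have := exp_ineq1_le (ln 2 * (a - x)); lra.
Qed.

Section Convexity.
Variables (T : Type) (f : T -> R).

Lemma sum_Rpower2_tangent (s : seq T) a :
  Rpower 2 (- a) * (INR (size s) - ln 2 * (\big[Rplus/0]_(i <- s) f i - a * INR (size s)))
  <= \big[Rplus/0]_(i <- s) Rpower 2 (- f i).
Proof.
elim: s => [|i s IHs]; first by rewrite !big_nil /=; lra.
rewrite !big_cons [size _]/= S_INR.
have := Rpower2_tangent a (f i); lra.
Qed.

Lemma INR_size_gt0 (s : seq T) : s <> [::] -> 0 < INR (size s).
Proof. by case: s => // i s _; rewrite [size _]/= S_INR; have := pos_INR (size s); lra. Qed.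

Lemma sum_Rpower2_ge_mean (s : seq T) : s <> [::] ->
  INR (size s) * Rpower 2 (- (\big[Rplus/0]_(i <- s) f i / INR (size s)))
  <= \big[Rplus/0]_(i <- s) Rpower 2 (- f i).
Proof.
move=> /INR_size_gt0 m0.
apply: Rle_trans (sum_Rpower2_tangent s (\big[Rplus/0]_(i <- s) f i / INR (size s))).
by apply: Req_le; field; lra.
Qed.

Lemma sum_ge_of_sum_Rpower2_le (s : seq T) K :
  s <> [::] -> \big[Rplus/0]_(i <- s) Rpower 2 (- f i) <= K ->
  INR (size s) * (log2 (INR (size s)) - log2 K) <= \big[Rplus/0]_(i <- s) f i.
Proof.
move=> s0 sum_le; have m0 := INR_size_gt0 s0.
set S := \big[Rplus/0]_(i <- s) f i.
have mean_le := Rle_trans _ _ _ (sum_Rpower2_ge_mean s0) sum_le.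
have pos : 0 < INR (size s) * Rpower 2 (- (S / INR (size s))).
  by apply: Rmult_lt_0_compat => //; apply: exp_pos.
have := log2_le pos mean_le; rewrite log2_mult ?log2_Rpower2 //; last exact: exp_pos.
move=> /(Rmult_le_compat_l _ _ _ (Rlt_le _ _ m0)).
have -> : INR (size s) * (log2 (INR (size s)) + - (S / INR (size s)))
          = INR (size s) * log2 (INR (size s)) - S by field; lra.
lra.
Qed.

End Convexity.

Lemma inv_ln2_bounds : 0 < / ln 2 < 2.
Proof.
have := ln_lt_2 => ln2_gt; split; first by apply: Rinv_0_lt_compat; lra.
rewrite -[X in _ < X]Rinv_inv; apply: Rinv_lt_contravar ln2_gt.
by apply: Rmult_lt_0_compat; have := ln_lt_2; lra.
Qed.

Lemma log2_1_add_le z : 0 <= z -> log2 (1 + z) <= 2 * z.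
Proof.
move=> z0; have [inv_ln2_pos inv_ln2_lt] := inv_ln2_bounds.
have := Rmult_le_compat_r _ _ _ (Rlt_le _ _ inv_ln2_pos) (@ln_le_sub1 (1 + z) ltac:(lra)).
rewrite /log2 /Rdiv; nra.
Qed.

Lemma log2_1_sub_ge y : 0 <= y <= 1 / 2 -> - (4 * y) <= log2 (1 - y).
Proof.
move=> two_div_l; have [inv_ln2_pos inv_ln2_lt] := inv_ln2_bounds.
have inv_le : / (1 - y) <= 1 + 2 * y.
  apply: (Rmult_le_reg_l (1 - y)); first lra.
  by rewrite Rinv_r; nra.
have := @ln_le_sub1 (/ (1 - y)) ltac:(apply: Rinv_0_lt_compat; lra).
rewrite ln_Rinv; last lra.
move=> ln_inv_le; have ln_ge : - (2 * y) <= ln (1 - y) by lra.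
have := Rmult_le_compat_r _ _ _ (Rlt_le _ _ inv_ln2_pos) ln_ge.
rewrite /log2 /Rdiv; nra.
Qed.

Lemma log2_quadratic_le l D : 5 <= l -> l ^ 2 <= D <= l ^ 2 + 1 ->
  log2 (1 + D + D * D) <= 4 * log2 l + 2 / l.
Proof.
move=> l5 [Dlo Dhi]; have l2_pos : 0 < l * l by nra.
have z0 : 0 <= 4 / (l * l) by apply/Rlt_le/Rdiv_lt_0_compat; lra.
have K_le : 1 + D + D * D <= l ^ 4 * (1 + 4 / (l * l)).
  have -> : l ^ 4 * (1 + 4 / (l * l)) = l ^ 4 + 4 * (l * l) by field; lra.
  simpl in *; nra.
apply: Rle_trans (log2_le _ K_le) _; first by simpl in *; nra.
rewrite log2_mult; [|by apply: pow_lt; lra|lra].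
have -> : log2 (l ^ 4) = 4 * log2 l.
  by rewrite /log2 ln_pow; [simpl; field; have := ln_lt_2; lra|lra].
have := log2_1_add_le z0.
have : 2 * (4 / (l * l)) <= 2 / l.
  apply: (Rmult_le_reg_l (l * l)) => //.
  have -> : l * l * (2 * (4 / (l * l))) = 8 by field; lra.
  have -> : l * l * (2 / l) = 2 * l by field; lra.
  lra.
lra.
Qed.

Lemma log2_ge_of_pow2_le k x : 2 ^ k <= x -> INR k <= log2 x.
Proof. by move=> le_x; rewrite -log2_pow2; apply: log2_le le_x; apply: pow_lt; lra. Qed.

Lemma few_high_vertices (nR e hh D l : R) :
  0 < l -> l ^ 2 <= D -> 0 <= hh -> D * hh <= 2 * e -> e < nR * l ->
  nR * (1 - 2 / l) <= nR - hh.
Proof.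
move=> l0 D_ge hh0 high_le small.
have hh_lt : hh * l < 2 * nR.
  by apply: (Rmult_lt_reg_l l) => //; simpl in D_ge; nra.
suff : hh <= nR * (2 / l) by lra.
apply: (Rmult_le_reg_r l) => //.
have -> : nR * (2 / l) * l = 2 * nR by field; lra.
lra.
Qed.

Lemma shrink_factor_ge m l q : 5 <= l -> 2 <= q -> 0 <= m ->
  m * (l - 4 * q - 2) <= m * (1 - 2 / l) * (l - 4 * q - 10 / l).
Proof.
move=> l5 q2 m0.
have -> : m * (1 - 2 / l) * (l - 4 * q - 10 / l)
          = m * (l - 4 * q - 2) + m * ((8 * q - 10) * / l + 20 * / (l * l)).
  by field; lra.
suff : 0 <= m * ((8 * q - 10) * / l + 20 * / (l * l)) by lra.
have inv_l : 0 <= / l by apply/Rlt_le/Rinv_0_lt_compat; lra.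
have inv_l2 : 0 <= / (l * l) by apply/Rlt_le/Rinv_0_lt_compat; nra.
by apply: Rmult_le_pos => //; apply: Rplus_le_le_0_compat; apply: Rmult_le_pos; lra.
Qed.

Lemma rainbow2_bound_real (nR e hh D : R) :
  32 <= nR -> log2 nR ^ 2 <= D <= log2 nR ^ 2 + 1 -> 0 <= hh -> D * hh <= 2 * e ->
  (0 < nR - hh -> (nR - hh) * (log2 (nR - hh) - log2 (1 + D + D * D)) <= e) ->
  nR * log2 nR - 4 * nR * log2 (log2 nR) - 2 * nR <= e.
Proof.
move=> n32 D_bnd hh0 high_le entropy_le.
set l := log2 nR in D_bnd *; set q := log2 l.
have l5 : 5 <= l by have := @log2_ge_of_pow2_le 5 nR; rewrite -/l /=; lra.
have q2 : 2 <= q by have := @log2_ge_of_pow2_le 2 l; rewrite -/q /=; lra.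
have e0 : 0 <= e by simpl in D_bnd; nra.
have [big|small] := Rle_or_lt (nR * l) e; first by nra.
have low_ge := few_high_vertices (l := l) ltac:(lra) (proj1 D_bnd) hh0 high_le small.
have two_div_l : 0 <= 2 / l <= 2 / 5.
  split; first by apply/Rlt_le/Rdiv_lt_0_compat; lra.
  by apply: Rmult_le_compat_l; [lra|apply: Rinv_le_contravar; lra].
have low_pos : 0 < nR - hh by nra.
have log_low : l - 4 * (2 / l) <= log2 (nR - hh).
  have shrunk_pos : 0 < nR * (1 - 2 / l) by nra.
  apply: Rle_trans (log2_le shrunk_pos low_ge); rewrite log2_mult -/l; try lra.
  by have := @log2_1_sub_ge (2 / l) ltac:(lra); lra.
have log_K : log2 (1 + D + D * D) <= 4 * q + 2 / l := log2_quadratic_le l5 D_bnd.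
set B0 := l - 4 * q - 10 / l.
have B_ge : B0 <= log2 (nR - hh) - log2 (1 + D + D * D) by rewrite /B0; lra.
have [B_neg|B_nonneg] := Rlt_or_le B0 0.
  have : nR * (B0 + 5 * (2 / l) - 2) <= 0 by nra.
  by rewrite /B0; lra.
have -> : nR * l - 4 * nR * q - 2 * nR = nR * (l - 4 * q - 2) by ring.
apply: Rle_trans (shrink_factor_ge (m := nR) l5 q2 ltac:(lra)) _.
apply: Rle_trans (Rmult_le_compat_r _ _ _ B_nonneg low_ge) _.
exact: Rle_trans (Rmult_le_compat_l _ _ _ (Rlt_le _ _ low_pos) B_ge) (entropy_le low_pos).
Qed.

Lemma exists_nat_between r : 0 <= r -> exists D : nat, r <= INR D <= r + 1.
Proof.
move=> r0; have [up_gt up_le] := archimed r.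
have up0 : (0 <= up r)%Z by apply: le_IZR; lra.
by exists (Z.to_nat (up r)); rewrite INR_IZR_INZ Znat.Z2Nat.id //; lra.
Qed.

Lemma INR_sum (I : Type) (r : seq I) (P : pred I) (F : I -> nat) :
  INR (\sum_(i <- r | P i) F i) = \big[Rplus/0]_(i <- r | P i) INR (F i).
Proof. exact: (big_morph INR plus_INR). Qed.

Lemma Rmult_big_distrr c (I : Type) (r : seq I) (P : pred I) (F : I -> R) :
  c * \big[Rplus/0]_(i <- r | P i) F i = \big[Rplus/0]_(i <- r | P i) (c * F i).
Proof. exact: (big_morph (Rmult c) (Rmult_plus_distr_l c) (Rmult_0_r c)). Qed.

Lemma INR_expn2 k : INR (2 ^ k) = Rpower 2 (INR k).
Proof.
elim: k => [|k IHk]; first by rewrite Rpower_O //; lra.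
by rewrite expnS -multE mult_INR IHk (S_INR k) Rpower_plus Rpower_1 /=; [ring|lra].
Qed.

Lemma INR_expn2_sub n h : (h <= n)%N -> INR (2 ^ (n - h)) = INR (2 ^ n) * Rpower 2 (- INR h).
Proof. by move=> /leP hn; rewrite !INR_expn2 minus_INR // -Rpower_plus. Qed.

Lemma rainbow2_card_edges_ge n (E : {set {set 'I_n}}) :
  simple_graph E -> rainbow_connected 2 E -> (32 <= n)%N ->
  INR n * log2 (INR n) - 4 * INR n * log2 (log2 (INR n)) - 2 * INR n <= INR #|E|.
Proof.
move=> simpleE [c rainbow_c] n32.
have [D D_bnd] := exists_nat_between (pow2_ge_0 (log2 (INR n))).
apply: (rainbow2_bound_real (hh := INR #|~: low E D|) (D := INR D)) => //.
- by apply: Rle_trans (le_INR _ _ (leP n32)); simpl; lra.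
- exact: pos_INR.
- have := le_INR _ _ (leP (card_high_le simpleE D)).
  by rewrite -!multE !mult_INR [INR 2]/=; lra.
have -> : INR n - INR #|~: low E D| = INR #|low E D|.
  have := congr1 INR (cardsC (low E D)); rewrite card_ord -plusE plus_INR; lra.
move=> low_pos; rewrite cardE; set s := enum (low E D).
have s_ne : s <> [::] by move=> s0; rewrite cardE -/s s0 /= in low_pos; lra.
have -> : 1 + INR D + INR D * INR D = INR (1 + D + D * D).
  by rewrite -plusE -multE !plus_INR mult_INR [INR 1]/=.
apply: Rle_trans (sum_ge_of_sum_Rpower2_le (f := fun u => INR #|high_nbhd E D u|) s_ne _) _.
  have high_le u : (#|high_nbhd E D u| <= n)%N.
    by apply: leq_trans (max_card _) _; rewrite card_ord.
  have pow_pos : 0 < INR (2 ^ n) by rewrite INR_expn2; apply: exp_pos.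
  have := le_INR _ _ (leP (sum_agreeing_low D rainbow_c)).
  rewrite -big_enum -/s INR_sum -multE mult_INR.
  under eq_bigr => u _ do rewrite (INR_expn2_sub (high_le u)).
  by rewrite -Rmult_big_distrr => /(Rmult_le_reg_l _ _ _ pow_pos).
by rewrite -INR_sum big_enum; apply/le_INR/leP/sum_high_nbhd_low.
Qed.

Theorem proposition1 :
  exists N : nat, forall n : nat, leq N n ->
    INR (t n 2) >= INR n * log2 (INR n) - 4 * INR n * log2 (log2 (INR n))
                   - 2 * INR n.
Proof.
exists 32%N => n n32; apply: Rle_ge; rewrite /t.
apply: (big_ind (fun m => _ <= INR m)).
- rewrite -card_complete_graph; apply: rainbow2_card_edges_ge => //.
    exact: complete_graph_simple.
  exact: complete_graph_rainbow.
- by move=> a b; case: leqP.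
- move=> E; rewrite /asb.
  case: ClassicalEpsilon.excluded_middle_informative => // -[simpleE rainbowE] _.
  exact: rainbow2_card_edges_ge.
Qed.
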